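(* Let $(\mathcal S,\mu)$ be a probability space and $a,b\ge0$. For all $W_1,W_2\in\mathcal W$, $$\|W_1^{(a,b)}-W_2^{(a,b)}\|_\square\le7\|W_1-W_2\|_\square.$$ Moreover, for every $W\in\mathcal W$, if $a>0$ then $\sup_x\lambda_{W^{(a,b)}}(x)\le e^{-1}/a$, and if $b>0$ then $\sup_y\lambda'_{W^{(a,b)}}(y)\le e^{-1}/b$.
   Context: $\mathcal W$ is the set of integrable measurable $W:\mathcal S^2\to[0,\infty)$ (not necessarily symmetric). Marginals: $\lambda_W(x)=\int W(x,y)\,d\mu(y)$ and $\lambda'_W(y)=\int W(x,y)\,d\mu(x)$ (values in $[0,\infty]$). For $a,b\ge0$, $W^{(a,b)}(x,y)=e^{-a\lambda_W(x)}W(x,y)e^{-b\lambda'_W(y)}$. Cut norm: $\|W\|_\square=\sup_{\|f\|_\infty,\|g\|_\infty\le1}|\int f(x)g(y)W(x,y)\,d\mu(x)d\mu(y)|$. *)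

From HB Require Import structures.
From mathcomp Require Import all_boot all_order all_algebra.
From mathcomp Require Import all_classical all_reals all_analysis.
Set Implicit Arguments. Unset Strict Implicit. Unset Printing Implicit Defensive.
Import Order.TTheory GRing.Theory Num.Theory.
Local Open Scope classical_set_scope.
Local Open Scope ring_scope.
Local Open Scope ereal_scope.

Section Kernels.
Context {R : realType} {d : measure_display} {T : measurableType d}.
Variable mu : {measure set T -> \bar R}.

Definition inWclass (W : T * T -> R) : Prop :=
  (forall z, (0 <= W z)%R) /\ (mu \x mu).-integrable setT (fun z => (W z)%:E).

Definition lam (W : T * T -> R) (x : T) : \bar R := \int[mu]_y (W (x, y))%:E.
Definition lam' (W : T * T -> R) (y : T) : \bar R := \int[mu]_x (W (x, y))%:E.

(* e^{-a l} for l in [0, +oo], with the convention 0 * oo = 0 *)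
Definition expfac (a : R) (l : \bar R) : R :=
  match l with
  | r%:E => expR (- (a * r))
  | +oo => if a == 0%R then 1%R else 0%R
  | -oo => 1%R
  end.

Definition Wab (a b : R) (W : T * T -> R) : T * T -> R :=
  fun z => (expfac a (lam W z.1) * W z * expfac b (lam' W z.2))%R.

Definition cutnorm (W : T * T -> R) : \bar R :=
  ereal_sup [set e | exists f g : T -> R,
    [/\ measurable_fun setT f, measurable_fun setT g,
        (forall x, `|f x| <= 1)%R, (forall y, `|g y| <= 1)%R &
        e = `| \int[mu \x mu]_z ((f z.1 * g z.2 * W z)%R)%:E |] ].

End Kernels.

(* Write h_i = e^{-a lam_{W_i}} and k_i = e^{-b lam'_{W_i}}, so that
     W_1^{(a,b)} - W_2^{(a,b)}
       = (h_1 - h_2) W_1 k_1 + h_2 (W_1 - W_2) k_1 + h_2 W_2 (k_1 - k_2).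
   Against a test function f(x) g(y) with |f|, |g| <= 1, the middle term is
   again a test of W_1 - W_2, because 0 <= h_2, k_1 <= 1.  The first term is at
   most the integral of |h_1 - h_2| lam_{W_1}, and the elementary inequality
   |e^{-ar} - e^{-as}| r <= (1 + e^{-1}) |r - s| bounds it by
   (1 + e^{-1}) ||lam_{W_1} - lam_{W_2}||_1; testing W_1 - W_2 against
   f = sign(lam_{W_1} - lam_{W_2}) and g = 1 shows that this L^1 distance is at
   most the cut norm.  The last term is the first one for the transposed kernels.
   The total constant is 3 + 2/e <= 7.  The degree bound is
   lam_{W^{(a,b)}} <= e^{-a lam_W} lam_W <= sup_t t e^{-at} = e^{-1}/a. *)

From HB Require Import structures.
From mathcomp Require Import all_boot all_order all_algebra.
From mathcomp Require Import all_classical all_reals all_analysis.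
From mathcomp Require Import measurable_realfun ring lra.
Import Order.TTheory GRing.Theory Num.Theory.
Set Implicit Arguments. Unset Strict Implicit. Unset Printing Implicit Defensive.
Local Open Scope classical_set_scope.
Local Open Scope ring_scope.

Section exponential_bounds.
Variable R : realType.
Implicit Types a r s t : R.

Lemma expRN_mulr_le t : t * expR (- t) <= expR (-1).
Proof.
have : t <= expR (t - 1) by have := expR_ge1Dx (t - 1); rewrite addrC subrK.
move=> /(ler_wpM2r (expR_ge0 (- t))); rewrite -expRD.
by rewrite addrAC subrr add0r.
Qed.

Lemma expRN_sub_le s t : expR (- s) - expR (- t) <= expR (- s) * (t - s).
Proof.
have -> : expR (- t) = expR (- s) * expR (- (t - s)).
  by rewrite -expRD; congr expR; ring.
rewrite -{1}(mulr1 (expR (- s))) -mulrBr ler_wpM2l ?expR_ge0 //.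
by have := expR_ge1Dx (- (t - s)); lra.
Qed.

Lemma expRN_dist_mulr_le a r s : 0 <= a -> 0 <= r -> 0 <= s ->
  `|expR (- (a * r)) - expR (- (a * s))| * r <= (1 + expR (-1)) * `|r - s|.
Proof.
move=> a0 r0 s0; have [rs|sr] := leP r s.
- have d0 : 0 <= s - r by rewrite subr_ge0.
  have er : expR (- (a * s)) <= expR (- (a * r)).
    by rewrite ler_expR lerN2 ler_wpM2l.
  rewrite ger0_norm ?subr_ge0 // distrC (ger0_norm d0).
  have h1 := ler_wpM2r r0 (expRN_sub_le (a * r) (a * s)).
  have h2 := ler_wpM2r d0 (expRN_mulr_le (a * r)).
  lra.
- have d0 : 0 <= r - s by rewrite subr_ge0 ltW.
  have es : expR (- (a * r)) <= expR (- (a * s)).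
    by rewrite ler_expR lerN2 ler_wpM2l // ltW.
  rewrite ler0_norm ?subr_le0 // opprB (ger0_norm d0).
  have X1 : expR (- (a * s)) - expR (- (a * r)) <= 1.
    have : expR (- (a * s)) <= 1 by rewrite expR_le1 oppr_le0 mulr_ge0.
    by have := expR_ge0 (- (a * r)); lra.
  have h1 := ler_wpM2r s0 (expRN_sub_le (a * s) (a * r)).
  have h2 := ler_wpM2r d0 (expRN_mulr_le (a * s)).
  have h3 := ler_wpM2r d0 X1.
  lra.
Qed.

End exponential_bounds.

Section expfac.
Variable R : realType.
Implicit Types (a : R) (l : \bar R).
Local Open Scope ereal_scope.

Lemma expfac_ge0 a l : (0 <= expfac a l)%R.
Proof. by case: l => [r||] /=; [exact: expR_ge0|case: ifP|]. Qed.

Lemma expfac_le1 a l : (0 <= a)%R -> 0 <= l -> (expfac a l <= 1)%R.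
Proof.
move=> a0; case: l => [r||] //= r0; last by case: ifP.
by rewrite expR_le1 oppr_le0 mulr_ge0.
Qed.

Lemma normr_expfac_le1 a l : (0 <= a)%R -> 0 <= l -> (`|expfac a l| <= 1)%R.
Proof. by move=> a0 l0; rewrite ger0_norm ?expfac_ge0 ?expfac_le1. Qed.

Lemma normr_expfacB_le1 a l1 l2 : (0 <= a)%R -> 0 <= l1 -> 0 <= l2 ->
  (`|expfac a l1 - expfac a l2| <= 1)%R.
Proof.
move=> a0 l10 l20; have := expfac_ge0 a l1; have := expfac_ge0 a l2.
have := expfac_le1 a0 l10; have := expfac_le1 a0 l20.
by rewrite ler_norml; lra.
Qed.

Lemma expfac_mule_le a l : (0 < a)%R -> 0 <= l ->
  (expfac a l)%:E * l <= (expR (-1) / a)%:E.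
Proof.
move=> a0; case: l => [r||] //= r0; last first.
  by rewrite gt_eqF // mul0e lee_fin divr_ge0 ?expR_ge0 ?ltW.
rewrite -EFinM lee_fin ler_pdivlMr // (_ : _ * a = a * r * expR (- (a * r)))%R.
  exact: expRN_mulr_le.
by ring.
Qed.

Lemma measurable_expfac d (T : measurableType d) a (h : T -> \bar R) :
  measurable_fun setT h -> measurable_fun setT (fun x => expfac a (h x)).
Proof.
move=> mh; rewrite (_ : (fun x => _) = fun x =>
    if h x == +oo then expfac a +oo else expR (- (a * fine (h x)))); last first.
  by apply/funext => x; case: (h x) => [r||] //=; rewrite mulr0 oppr0 expR0.
apply: measurable_fun_ifT => //.
- apply: (measurable_fun_bool true); rewrite setTI.
  rewrite (_ : _ @^-1` _ = h @^-1` [set +oo]); last first.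
    by apply/seteqP; split => x /= /eqP.
  by rewrite -[X in measurable X]setTI; exact: mh (emeasurable_set1 _).
- apply: measurableT_comp; first exact: measurable_expR.
  apply: measurableT_comp => //; apply: measurableT_comp => //.
  exact: measurableT_comp (fine_measurable _) mh.
Qed.

End expfac.

Section product_coordinates.
Context d1 d2 d3 (T1 : measurableType d1) (T2 : measurableType d2)
  (U : measurableType d3).

Lemma measurable_comp_fst (f : T1 -> U) :
  measurable_fun setT f -> measurable_fun setT (fun z : T1 * T2 => f z.1).
Proof. by move=> mf; apply: measurableT_comp mf _; exact: measurable_fst. Qed.

Lemma measurable_comp_snd (g : T2 -> U) :
  measurable_fun setT g -> measurable_fun setT (fun z : T1 * T2 => g z.2).
Proof. by move=> mg; apply: measurableT_comp mg _; exact: measurable_snd. Qed.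

End product_coordinates.

Lemma measurable_tensor d1 d2 (T1 : measurableType d1) (T2 : measurableType d2)
    (R : realType) (f : T1 -> R) (g : T2 -> R) :
  measurable_fun setT f -> measurable_fun setT g ->
  measurable_fun setT (fun z : T1 * T2 => f z.1 * g z.2).
Proof.
by move=> mf mg; apply: measurable_funM;
  [exact: measurable_comp_fst|exact: measurable_comp_snd].
Qed.

Section product_swap.
Context d1 d2 (T1 : measurableType d1) (T2 : measurableType d2) (R : realType).
Variables (m1 : {sigma_finite_measure set T1 -> \bar R})
          (m2 : {sigma_finite_measure set T2 -> \bar R}).
Local Open Scope ereal_scope.

Lemma integrable_swap (F : T1 * T2 -> \bar R) :
  (m1 \x m2).-integrable setT F -> (m2 \x m1).-integrable setT (fun z => F (z.2, z.1)).
Proof.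
move=> iF; have mF := measurable_int _ iF.
apply/integrable12ltyP; first exact: measurableT_comp mF (@measurable_swap _ _ T2 T1).
exact: (integrable21ltyP m1 m2 mF).1 iF.
Qed.

Lemma integral_swap (F : T1 * T2 -> \bar R) :
  (m1 \x m2).-integrable setT F ->
  \int[m2 \x m1]_z F (z.2, z.1) = \int[m1 \x m2]_z F z.
Proof.
move=> iF; rewrite -(integral12_prod_meas1 (integrable_swap iF)).
exact: integral21_prod_meas1.
Qed.

End product_swap.

Lemma integrable_mulr_le1 d (T : measurableType d) (R : realType)
    (nu : {measure set T -> \bar R}) (h V : T -> R) :
  measurable_fun setT h -> (forall z, `|h z| <= 1) ->
  nu.-integrable setT (fun z => (V z)%:E) ->
  nu.-integrable setT (fun z => (h z * V z)%:E).
Proof.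
move=> mh h1 iV.
have hb : [bounded h z | z in setT].
  by exists 1; split => // M M1 z _; exact: le_trans (h1 z) (ltW M1).
apply: eq_integrable measurableT _ _ _ (integrableMr measurableT mh hb iV).
by move=> z _; rewrite /= EFinM.
Qed.

Lemma abse_integral_mulr_le d (U : measurableType d) (R : realType)
    (nu : {measure set U -> \bar R}) (c D V : U -> R) :
  measurable_fun setT c -> measurable_fun setT D -> measurable_fun setT V ->
  (forall z, `|c z| <= 1) -> (forall z, 0 <= V z) ->
  (`| \int[nu]_z (c z * D z * V z)%:E | <= \int[nu]_z (`|D z| * V z)%:E)%E.
Proof.
move=> mc mD mV c1 V0.
have mcDV : measurable_fun setT (fun z => c z * D z * V z).
  by apply: measurable_funM => //; exact: measurable_funM.
apply: le_trans (le_abse_integral _ measurableT _) _; first exact/measurable_EFinP.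
under eq_integral do rewrite abse_EFin.
apply: ge0_le_integral => //.
- by apply/measurable_EFinP; apply: measurableT_comp; first exact: normr_measurable.
- apply/measurable_EFinP; apply: measurable_funM => //.
  by apply: measurableT_comp; first exact: normr_measurable.
- move=> z _; rewrite lee_fin !normrM (ger0_norm (V0 z)).
  by rewrite ler_wpM2r // ler_piMl.
Qed.

Definition transp {T V : Type} (W : T * T -> V) : T * T -> V := fun z => W (z.2, z.1).

Section kernels.
Context {R : realType} {d : measure_display} {T : measurableType d}.
Variable mu : {sigma_finite_measure set T -> \bar R}.
Local Open Scope ereal_scope.
Local Notation P := (mu \x mu).
Implicit Types W : T * T -> R.

Lemma measurable_inWclass W : inWclass mu W -> measurable_fun setT W.
Proof. by move=> [_ /measurable_int/measurable_EFinP]. Qed.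

Lemma integrable_inWclassB W1 W2 : inWclass mu W1 -> inWclass mu W2 ->
  P.-integrable setT (fun z => (W1 z - W2 z)%:E).
Proof. by move=> [_ i1] [_ i2]; apply: eq_integrable (integrableB _ i1 i2). Qed.

Lemma lam_ge0 W : inWclass mu W -> forall x, 0 <= lam mu W x.
Proof. by move=> [W0 _] x; apply: integral_ge0 => y _; rewrite lee_fin. Qed.

Lemma measurable_lam W : inWclass mu W -> measurable_fun setT (lam mu W).
Proof.
move=> hW; apply: (measurable_fun_fubini_tonelli_F (EFin \o W)) => //.
  by apply/measurable_EFinP; exact: measurable_inWclass.
by move=> z; rewrite lee_fin; case: hW.
Qed.

Lemma lam_fin_num_ae W : inWclass mu W -> {ae mu, forall x, lam mu W x \is a fin_num}.
Proof.
move=> [_ iW]; apply: filterS (ae_integrable1 iW) => x ix.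
by have := integrable_fin_num measurableT ix.
Qed.

Lemma lam_transp W : lam mu (transp W) = lam' mu W.
Proof. by []. Qed.

Lemma lam'_transp W : lam' mu (transp W) = lam mu W.
Proof. by []. Qed.

Lemma inWclass_transp W : inWclass mu W -> inWclass mu (transp W).
Proof. by move=> [W0 iW]; split => [z|]; [exact: W0|exact: integrable_swap iW]. Qed.

Lemma Wab_transp (a b : R) W : transp (Wab mu a b W) = Wab mu b a (transp W).
Proof. by apply/funext => z; rewrite /Wab lam_transp lam'_transp /transp /=; ring. Qed.

Lemma abse_integral_le_cutnorm (f g : T -> R) W :
  measurable_fun setT f -> measurable_fun setT g ->
  (forall x, `|f x| <= 1)%R -> (forall y, `|g y| <= 1)%R ->
  `| \int[P]_z ((f z.1 * g z.2 * W z)%R)%:E | <= cutnorm mu W.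
Proof. by move=> mf mg f1 g1; apply: ereal_sup_ubound; exists f, g. Qed.

Lemma cutnorm_transp_le W : P.-integrable setT (fun z => (W z)%:E) ->
  cutnorm mu (transp W) <= cutnorm mu W.
Proof.
move=> iW; apply: ge_ereal_sup => _ [f [g [mf mg f1 g1 ->]]].
pose F z := ((g z.1 * f z.2 * W z)%R)%:E.
have iF : P.-integrable setT F.
  apply: (integrable_mulr_le1 (measurable_tensor mg mf)) iW => z.
  by rewrite normrM mulr_ile1.
rewrite (_ : \int[P]_z _ = \int[P]_z F (z.2, z.1)).
  by rewrite integral_swap //; exact: abse_integral_le_cutnorm.
by apply: eq_integral => z _; rewrite /F /= (mulrC (f _)).
Qed.

(* [fine] sends an infinite marginal to 0; marginals of kernels in the class
   are finite almost everywhere, so this is ||lam_{W1} - lam_{W2}||_1. *)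
Definition marginal_dist W1 W2 : \bar R :=
  \int[mu]_x (`|fine (lam mu W1 x) - fine (lam mu W2 x)|)%:E.

Lemma marginal_distC W1 W2 : marginal_dist W1 W2 = marginal_dist W2 W1.
Proof. by apply: eq_integral => x _; rewrite distrC. Qed.

Lemma measurable_fine_lam W : inWclass mu W ->
  measurable_fun setT (fun x => fine (lam mu W x)).
Proof. by move=> hW; apply: measurableT_comp (measurable_lam hW). Qed.

Lemma measurable_dist_fine_lam W1 W2 : inWclass mu W1 -> inWclass mu W2 ->
  measurable_fun setT (fun x => (`|fine (lam mu W1 x) - fine (lam mu W2 x)|)%:E).
Proof.
move=> h1 h2; apply/measurable_EFinP.
apply: measurableT_comp; first exact: normr_measurable.
by apply: measurable_funB; exact: measurable_fine_lam.
Qed.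

Lemma marginal_dist_le_cutnorm W1 W2 : inWclass mu W1 -> inWclass mu W2 ->
  marginal_dist W1 W2 <= cutnorm mu (fun z => W1 z - W2 z)%R.
Proof.
move=> h1 h2; pose r1 x := fine (lam mu W1 x); pose r2 x := fine (lam mu W2 x).
pose s x : R := if (r2 x < r1 x)%R then 1%R else (-1)%R.
have ms : measurable_fun setT s.
  by apply: measurable_fun_ifT => //; apply: measurable_fun_ltr;
    exact: measurable_fine_lam.
have s1 x : (`|s x| <= 1)%R by rewrite /s; case: ifP; rewrite ?normrN normr1.
pose F z := ((s z.1 * 1 * (W1 z - W2 z))%R)%:E.
have iF : P.-integrable setT F.
  have s11 (z : T * T) : (`|s z.1 * 1| <= 1)%R by rewrite mulr1.
  exact: integrable_mulr_le1 (measurable_tensor ms (measurable_cst (1%R : R))) s11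
    (integrable_inWclassB h1 h2).
suff -> : marginal_dist W1 W2 = \int[P]_z F z.
  have c1 (y : T) : (`|1%R| <= 1 :> R)%R by rewrite normr1.
  apply: le_trans (lee_abs _) _.
  exact: abse_integral_le_cutnorm ms (measurable_cst (1%R : R)) s1 c1.
rewrite -(integral12_prod_meas1 iF) /marginal_dist.
apply: ae_eq_integral => //.
- exact: measurable_dist_fine_lam.
- exact: measurable_fubini_F iF.
have [_ i1] := h1; have [_ i2] := h2.
apply: filterS2 (ae_integrable1 i1) (ae_integrable1 i2) => x ix1 ix2 _.
have sE : (`|r1 x - r2 x| = s x * (r1 x - r2 x))%R.
  rewrite /s; case: ltP => h; first by rewrite mul1r ger0_norm // subr_ge0 ltW.
  by rewrite mulN1r ler0_norm // subr_le0.
rewrite sE EFinM EFinB !fineK ?(integrable_fin_num measurableT) //.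
rewrite -integralB // -integralZl //; last exact: integrableB.
by apply: eq_integral => y _; rewrite /F /= mulr1 EFinM EFinB.
Qed.

Lemma integral_mulr_lam (h : T -> R) W : measurable_fun setT h ->
  (forall x, 0 <= h x)%R -> inWclass mu W ->
  \int[P]_z ((h z.1 * W z)%R)%:E = \int[mu]_x ((h x)%:E * lam mu W x).
Proof.
move=> mh h0 hW; have [W0 _] := hW.
have mhW : measurable_fun setT (fun z : T * T => ((h z.1 * W z)%R)%:E).
  apply/measurable_EFinP; apply: measurable_funM; last exact: measurable_inWclass hW.
  exact: measurable_comp_fst mh.
have hW0 z : 0 <= ((h z.1 * W z)%R)%:E by rewrite lee_fin mulr_ge0.
rewrite (fubini_tonelli1 _ mhW hW0); apply: eq_integral => x _; rewrite /fubini_F /=.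
under eq_integral do rewrite EFinM.
rewrite ge0_integralZl_EFin // => [y _|]; first by rewrite lee_fin.
by apply/measurable_EFinP; exact: measurable_fun_pair2 x (measurable_inWclass hW).
Qed.

Lemma reweight_le_marginal_dist (a : R) W1 W2 : (0 <= a)%R ->
  inWclass mu W1 -> inWclass mu W2 ->
  \int[P]_z ((`|expfac a (lam mu W1 z.1) - expfac a (lam mu W2 z.1)| * W1 z)%R)%:E
    <= (1 + expR (-1))%:E * marginal_dist W1 W2.
Proof.
move=> a0 h1 h2.
have mD : measurable_fun setT
    (fun x => `|expfac a (lam mu W1 x) - expfac a (lam mu W2 x)|)%R.
  apply: measurableT_comp; first exact: normr_measurable.
  by apply: measurable_funB; exact/measurable_expfac/measurable_lam.
have mL := measurable_dist_fine_lam h1 h2.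
rewrite (integral_mulr_lam mD _ h1) // /marginal_dist -ge0_integralZl_EFin //.
apply: ae_ge0_le_integral => //.
- by move=> x _; rewrite mule_ge0 ?lam_ge0.
- by apply: emeasurable_funM; [exact/measurable_EFinP|exact: measurable_lam].
- exact: measurable_funeM.
apply: filterS2 (lam_fin_num_ae h1) (lam_fin_num_ae h2) => x f1 f2 _.
move: f1 f2 (lam_ge0 h1 x) (lam_ge0 h2 x).
case: (lam mu W1 x) => [r1||] //; case: (lam mu W2 x) => [r2||] //= _ _ r10 r20.
by rewrite -!EFinM lee_fin expRN_dist_mulr_le -?lee_fin.
Qed.

Lemma reweight_row_le (a : R) W1 W2 : (0 <= a)%R ->
  inWclass mu W1 -> inWclass mu W2 ->
  \int[P]_z ((`|expfac a (lam mu W1 z.1) - expfac a (lam mu W2 z.1)| * W1 z)%R)%:E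
    <= (1 + expR (-1))%:E * cutnorm mu (fun z => W1 z - W2 z)%R.
Proof.
move=> a0 h1 h2; apply: le_trans (reweight_le_marginal_dist a0 h1 h2) _.
by rewrite lee_wpmul2l ?lee_fin ?addr_ge0 ?expR_ge0 ?marginal_dist_le_cutnorm.
Qed.

Lemma reweight_col_le (b : R) W1 W2 : (0 <= b)%R ->
  inWclass mu W1 -> inWclass mu W2 ->
  \int[P]_z ((`|expfac b (lam' mu W1 z.2) - expfac b (lam' mu W2 z.2)| * W2 z)%R)%:E
    <= (1 + expR (-1))%:E * cutnorm mu (fun z => W1 z - W2 z)%R.
Proof.
move=> b0 h1 h2; have h1t := inWclass_transp h1; have h2t := inWclass_transp h2.
pose D x := `|expfac b (lam mu (transp W2) x) - expfac b (lam mu (transp W1) x)|%R.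
have mD : measurable_fun setT D.
  apply: measurableT_comp; first exact: normr_measurable.
  by apply: measurable_funB; exact/measurable_expfac/measurable_lam.
have iD : P.-integrable setT (fun z => ((D z.1 * transp W2 z)%R)%:E).
  apply: integrable_mulr_le1 h2t.2 => [|z]; first exact: measurable_comp_fst mD.
  by rewrite normr_id normr_expfacB_le1 ?lam_ge0.
rewrite (_ : \int[P]_z _ = \int[P]_z ((D z.2 * transp W2 (z.2, z.1))%R)%:E).
  rewrite (integral_swap iD); apply: le_trans (reweight_le_marginal_dist b0 h2t h1t) _.
  rewrite marginal_distC lee_wpmul2l ?lee_fin ?addr_ge0 ?expR_ge0 //.
  apply: le_trans (marginal_dist_le_cutnorm h1t h2t) _.
  exact: cutnorm_transp_le (integrable_inWclassB h1 h2).
by apply: eq_integral => -[x y] _; rewrite /D /= distrC.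
Qed.

Lemma lam_Wab_le (a b : R) W : (0 < a)%R -> (0 <= b)%R -> inWclass mu W ->
  forall x, lam mu (Wab mu a b W) x <= (expR (-1) / a)%:E.
Proof.
move=> a0 b0 hW x; have [W0 _] := hW.
have mWx : measurable_fun setT (fun y => W (x, y)).
  exact: measurable_fun_pair2 x (measurable_inWclass hW).
apply: (@le_trans _ _ (\int[mu]_y ((expfac a (lam mu W x))%:E * (W (x, y))%:E))).
  apply: ge0_le_integral => //.
  - by move=> y _; rewrite lee_fin !mulr_ge0 ?expfac_ge0.
  - apply/measurable_EFinP; apply: measurable_funM.
      by apply: measurable_funM => //=; exact: measurable_cst.
    exact/measurable_expfac/(measurable_lam (inWclass_transp hW)).
  - by apply: measurable_funeM; exact/measurable_EFinP.
  - move=> y _; rewrite -EFinM lee_fin ler_piMr ?mulr_ge0 ?expfac_ge0 //.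
    exact/expfac_le1/(lam_ge0 (inWclass_transp hW)).
rewrite ge0_integralZl_EFin ?expfac_ge0 //; last 2 first.
- by move=> y _; rewrite lee_fin.
- exact/measurable_EFinP.
exact/expfac_mule_le/lam_ge0.
Qed.

Lemma lam'_Wab_le (a b : R) W : (0 <= a)%R -> (0 < b)%R -> inWclass mu W ->
  forall y, lam' mu (Wab mu a b W) y <= (expR (-1) / b)%:E.
Proof.
move=> a0 b0 hW y; rewrite -lam_transp Wab_transp.
exact: lam_Wab_le b0 a0 (inWclass_transp hW) y.
Qed.

Section Wab_difference.
Variables (a b : R) (W1 W2 : T * T -> R).
Hypotheses (a0 : (0 <= a)%R) (b0 : (0 <= b)%R).
Hypotheses (h1 : inWclass mu W1) (h2 : inWclass mu W2).

Let e1 x := expfac a (lam mu W1 x).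
Let e2 x := expfac a (lam mu W2 x).
Let k1 y := expfac b (lam' mu W1 y).
Let k2 y := expfac b (lam' mu W2 y).

Let me1 : measurable_fun setT e1 := measurable_expfac a (measurable_lam h1).
Let me2 : measurable_fun setT e2 := measurable_expfac a (measurable_lam h2).
Let mk1 : measurable_fun setT k1 :=
  measurable_expfac b (measurable_lam (inWclass_transp h1)).
Let mk2 : measurable_fun setT k2 :=
  measurable_expfac b (measurable_lam (inWclass_transp h2)).

Let e2_le1 x : (`|e2 x| <= 1)%R.
Proof. by rewrite normr_expfac_le1 ?lam_ge0. Qed.

Let k1_le1 y : (`|k1 y| <= 1)%R.
Proof. by rewrite normr_expfac_le1 ?(lam_ge0 (inWclass_transp h1)). Qed.

Let e12_le1 x : (`|e1 x - e2 x| <= 1)%R.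
Proof. by rewrite normr_expfacB_le1 ?lam_ge0. Qed.

Let k12_le1 y : (`|k1 y - k2 y| <= 1)%R.
Proof. by rewrite normr_expfacB_le1 ?(lam_ge0 (inWclass_transp _)). Qed.

Lemma abse_integral_Wab_sub_le (f g : T -> R) :
  measurable_fun setT f -> measurable_fun setT g ->
  (forall x, `|f x| <= 1)%R -> (forall y, `|g y| <= 1)%R ->
  `| \int[P]_z ((f z.1 * g z.2 * (Wab mu a b W1 z - Wab mu a b W2 z))%R)%:E |
    <= 7%:E * cutnorm mu (fun z => W1 z - W2 z)%R.
Proof.
move=> mf mg f1 g1.
have mfe : measurable_fun setT (fun x => f x * e2 x)%R by exact: measurable_funM.
have mgk : measurable_fun setT (fun y => g y * k1 y)%R by exact: measurable_funM.
pose cA z := (f z.1 * (g z.2 * k1 z.2))%R; pose cC z := (f z.1 * e2 z.1 * g z.2)%R.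
have mcA : measurable_fun setT cA := measurable_tensor mf mgk.
have mcC : measurable_fun setT cC := measurable_tensor mfe mg.
have cA1 z : (`|cA z| <= 1)%R by rewrite !normrM !mulr_ile1.
have cC1 z : (`|cC z| <= 1)%R by rewrite !normrM !mulr_ile1.
have mDA : measurable_fun setT (fun z : T * T => e1 z.1 - e2 z.1)%R.
  exact: measurable_comp_fst (measurable_funB me1 me2).
have mDC : measurable_fun setT (fun z : T * T => k1 z.2 - k2 z.2)%R.
  exact: measurable_comp_snd (measurable_funB mk1 mk2).
pose A z := ((cA z * (e1 z.1 - e2 z.1)) * W1 z)%R%:E.
pose B z := ((f z.1 * e2 z.1) * (g z.2 * k1 z.2) * (W1 z - W2 z))%R%:E.
pose C z := ((cC z * (k1 z.2 - k2 z.2)) * W2 z)%R%:E.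
have iA : P.-integrable setT A.
  apply: integrable_mulr_le1 h1.2 => [|z]; first exact: measurable_funM.
  by rewrite normrM mulr_ile1.
have iB : P.-integrable setT B.
  apply: integrable_mulr_le1 (integrable_inWclassB h1 h2) => [|z].
    exact: measurable_tensor mfe mgk.
  by rewrite !normrM !mulr_ile1.
have iC : P.-integrable setT C.
  apply: integrable_mulr_le1 h2.2 => [|z]; first exact: measurable_funM.
  by rewrite normrM mulr_ile1.
rewrite (_ : \int[P]_z _ = \int[P]_z (A z + B z + C z)); last first.
  apply: eq_integral => z _; rewrite /A /B /C -!EFinD /cA /cC /e1 /e2 /k1 /k2 /Wab.
  by congr EFin; ring.
rewrite integralD ?integrableD // integralD //.
set N := cutnorm mu _.
have hA : `|\int[P]_z A z| <= (1 + expR (-1))%:E * N.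
  apply: le_trans (reweight_row_le a0 h1 h2).
  exact: abse_integral_mulr_le mcA mDA (measurable_inWclass h1) cA1 h1.1.
have hB : `|\int[P]_z B z| <= N.
  by apply: abse_integral_le_cutnorm mfe mgk _ _ => [x|y]; rewrite normrM mulr_ile1.
have hC : `|\int[P]_z C z| <= (1 + expR (-1))%:E * N.
  apply: le_trans (reweight_col_le b0 h1 h2).
  exact: abse_integral_mulr_le mcC mDC (measurable_inWclass h2) cC1 h2.1.
have N0 : 0 <= N := le_trans (abse_ge0 _) hB.
apply: le_trans (lee_abs_add _ _) _.
apply: le_trans (leeD (lee_abs_add _ _) (lexx _)) _.
apply: le_trans (leeD (leeD hA hB) hC) _.
have c0 : (0 <= 1 + expR (-1) :> R)%R by rewrite addr_ge0 ?expR_ge0.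
rewrite -{2}(mul1e N) -!ge0_muleDl ?lee_fin ?addr_ge0 // -!EFinD lee_wpmul2r //.
have E1 : (expR (-1) <= 1 :> R)%R by rewrite expR_le1 lerN10.
by rewrite lee_fin; lra.
Qed.

End Wab_difference.

End kernels.

Unset Implicit Arguments.

Theorem mainTheorem12 (R : realType) (d : measure_display) (T : measurableType d)
  (mu : probability T R) (a b : R) (ha : 0 <= a) (hb : 0 <= b) :
  (forall W1 W2 : T * T -> R, inWclass mu W1 -> inWclass mu W2 ->
     (cutnorm mu (fun z => (Wab mu a b W1 z - Wab mu a b W2 z)%R)
       <= 7%:E * cutnorm mu (fun z => (W1 z - W2 z)%R))%E) /\
  (forall W : T * T -> R, inWclass mu W ->
     (0 < a -> forall x, (lam mu (Wab mu a b W) x <= (expR (-1) / a)%:E)%E) /\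
     (0 < b -> forall y, (lam' mu (Wab mu a b W) y <= (expR (-1) / b)%:E)%E)).
Proof.
split=> [W1 W2 h1 h2|W hW].
  apply: ge_ereal_sup => _ [f [g [mf mg f1 g1 ->]]].
  exact: abse_integral_Wab_sub_le.
by split=> [a0|b0]; [exact: lam_Wab_le|exact: lam'_Wab_le].
Qed.
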